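(* Let $p\ge1$ and $m\ge1$ be integers. Let $S=(S_1,S_2,\dots,S_N)$ be a finite sequence of words of length $m$ over $\{0,1\}$, each containing exactly one letter $1$; let $\sigma(b)$ denote the position of the $1$ in $S_b$. Suppose that for every position $s$ and every indices $a_1<a_2<\dots<a_p$ with $\sigma(a_1)=\dots=\sigma(a_p)=s$ there exists an index $b$ with $a_1<b<a_p$ and $\sigma(b)<s$. Then $N\le p^m-1$. *)

From mathcomp Require Import all_boot.
Set Implicit Arguments. Unset Strict Implicit. Unset Printing Implicit Defensive.

(* A word over {0,1} is a seq bool (true = letter 1). *)
Definition one_hot (w : seq bool) : bool := count id w == 1.

(* Position (0-based) of the letter 1 in the b-th word (0-based) of S. *)
Definition sigma (S : seq (seq bool)) (b : nat) : nat := index true (nth [::] S b).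

From mathcomp Require Import all_boot.
From mathcomp Require Import zify.

(* For a position s and a time n, let c_n(s) count the words S_i (i < n) with
   sigma(i) = s occurring after the last word with sigma < s.  Any p such
   occurrences would violate the hypothesis, so every c_n(s) is < p.  Reading
   (c_n(0), ..., c_n(m-1)) as a base-p numeral, adding the word S_n increments
   the digit at sigma(n), resets the less significant digits and keeps the more
   significant ones: the numeral strictly increases with n.  Hence
   N <= c_N < p^m. *)

Fixpoint base_value (p : nat) (c : nat -> nat) (s n : nat) : nat :=
  if n is n'.+1 then c s * p ^ n' + base_value p c s.+1 n' else 0.

Lemma base_value_lt p c n s : (forall j, s <= j < s + n -> c j < p) ->
  base_value p c s n < p ^ n.
Proof.
elim: n s => [|n IH] s c_lt_p //=.
have lt_rest := IH s.+1 (fun j Hj => c_lt_p j ltac:(lia)).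
have lt_head : c s < p by apply: c_lt_p; lia.
rewrite expnS; nia.
Qed.

Lemma base_value_lt_lex p c c' x n s : s <= x < s + n ->
  (forall j, s <= j < x -> c' j = c j) -> c x < c' x ->
  (forall j, s <= j < s + n -> c j < p) ->
  base_value p c s n < base_value p c' s n.
Proof.
elim: n s => [|n IH] s x_in eq_below lt_x c_lt_p /=; first by lia.
have [eq_xs|x_neq_s] := eqVneq x s.
  subst x; have lt_rest : base_value p c s.+1 n < p ^ n.
    by apply: base_value_lt => j Hj; apply: c_lt_p; lia.
  nia.
have -> : c' s = c s by apply: eq_below; lia.
rewrite ltn_add2l; apply: IH => //.
- by move: x_neq_s => /eqP; lia.
- by move=> j Hj; apply: eq_below; lia.
- by move=> j Hj; apply: c_lt_p; lia.
Qed.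

(* [run_count t n s] is c_n(s) above, for the position sequence [t]. *)
Fixpoint run_count (t : nat -> nat) (n s : nat) : nat :=
  if n is n'.+1 then
    if t n' < s then 0 else if t n' == s then (run_count t n' s).+1
    else run_count t n' s
  else 0.

Lemma run_count_at t n : run_count t n.+1 (t n) = (run_count t n (t n)).+1.
Proof. by rewrite /= ltnn eqxx. Qed.

Lemma run_count_below t n j : j < t n -> run_count t n.+1 j = run_count t n j.
Proof. by move=> lt_j /=; rewrite ltnNge ltnW //= gtn_eqF. Qed.

Lemma sorted_rcons_ltn (a : seq nat) n : sorted ltn a ->
  all (fun i => i < n) a -> sorted ltn (rcons a n).
Proof.
case: a => [|x a] // sorted_a lt_n; rewrite /= rcons_path; apply/andP; split=> //.
exact: (allP lt_n _ (mem_last x a)).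
Qed.

Lemma run_count_witness t s n q : q <= run_count t n s ->
  exists a : seq nat, [/\ size a = q, sorted ltn a, all (fun i => i < n) a,
    all (fun i => t i == s) a &
    0 < q -> forall j, nth 0 a 0 <= j < n -> s <= t j].
Proof.
elim: n q => [|n IH] q /=; first by rewrite leqn0 => /eqP ->; exists [::].
case: q => [_|q]; first by exists [::].
case: (ltnP (t n) s) => // ge_tn; case: (eqVneq (t n) s) => [eq_tn|neq_tn] le_q.
- have [a [size_a sorted_a lt_a t_a first_a]] := IH q le_q.
  exists (rcons a n); split.
  + by rewrite size_rcons size_a.
  + exact: sorted_rcons_ltn.
  + rewrite all_rcons ltnSn; apply/allP => i /(allP lt_a); lia.
  + by rewrite all_rcons eq_tn eqxx.
  + move=> _ j; rewrite nth_rcons; case: q size_a first_a {le_q} => [|q].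
      by move/size0nil-> => _ /= j_in; have -> : j = n by lia.
    move=> size_a first_a; rewrite size_a /= => j_in.
    have [lt_jn|ge_jn] := ltnP j n; first by apply: first_a => //; lia.
    by have -> : j = n by lia.
- have [a [size_a sorted_a lt_a t_a first_a]] := IH q.+1 le_q.
  exists a; split=> //; first by apply/allP => i /(allP lt_a); lia.
  move=> _ j j_in; have [lt_jn|ge_jn] := ltnP j n; first by apply: first_a; lia.
  by have -> : j = n by lia.
Qed.

Section SeparatedPositions.

Context {p N : nat} {t : nat -> nat}.
Hypothesis p_gt0 : 0 < p.
Hypothesis separated : forall (s : nat) (a : seq nat),
  size a = p -> sorted ltn a -> all (fun i => i < N) a ->
  all (fun i => t i == s) a ->
  exists b, nth 0 a 0 < b < nth 0 a p.-1 /\ t b < s.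

Lemma run_count_lt n s : n <= N -> run_count t n s < p.
Proof.
move=> le_nN; rewrite ltnNge; apply/negP => /run_count_witness.
case=> a [size_a sorted_a lt_a t_a first_a].
have [|b [b_in lt_tb]] := separated s a size_a sorted_a _ t_a.
  by apply/allP => i /(allP lt_a); lia.
have last_lt : nth 0 a p.-1 < n.
  by apply: (allP lt_a); apply: mem_nth; rewrite size_a prednK.
have := first_a p_gt0 b; lia.
Qed.

Lemma le_base_value_run_count m n : n <= N -> (forall i, i < N -> t i < m) ->
  n <= base_value p (run_count t n) 0 m.
Proof.
move=> le_nN t_lt_m; elim: n le_nN => [//|n IH] lt_nN.
suff : base_value p (run_count t n) 0 m < base_value p (run_count t n.+1) 0 m.
  by have := IH (ltnW lt_nN); lia.
apply: (@base_value_lt_lex _ _ _ (t n)) => [|j /andP [_ lt_j]||j _].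
- by have := t_lt_m n lt_nN; lia.
- exact: run_count_below.
- by rewrite run_count_at.
- by apply: run_count_lt; lia.
Qed.

End SeparatedPositions.

Lemma sigma_lt m S i : all (fun w => size w == m) S -> all one_hot S ->
  i < size S -> sigma S i < m.
Proof.
move=> /allP size_S /allP one_hot_S lt_i; rewrite /sigma.
have S_i : nth [::] S i \in S by apply: mem_nth.
rewrite -(eqP (size_S _ S_i)) index_mem.
have /hasP [b b_in b_true] : has id (nth [::] S i).
  by rewrite has_count (eqP (one_hot_S _ S_i)).
by move: b_true b_in => ->.
Qed.

Theorem lemmac (p m : nat) (S : seq (seq bool)) :
  1 <= p -> 1 <= m ->
  all (fun w => size w == m) S ->
  all one_hot S ->
  (forall (s : nat) (a : seq nat),
      size a = p -> sorted ltn a -> all (fun i => i < size S) a ->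
      all (fun i => sigma S i == s) a ->
      exists b, nth 0 a 0 < b < nth 0 a p.-1 /\ sigma S b < s) ->
  size S <= p ^ m - 1.
Proof.
move=> p_gt0 _ size_S one_hot_S separated.
have sigma_lt_m i : i < size S -> sigma S i < m := @sigma_lt m S i size_S one_hot_S.
have le_value := le_base_value_run_count p_gt0 separated m _ (leqnn _) sigma_lt_m.
have := @base_value_lt p (run_count (sigma S) (size S)) m 0
  (fun j _ => run_count_lt p_gt0 separated _ j (leqnn _)).
lia.
Qed.
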